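(* Let $M$ be a finite-dimensional vector space, $[\cdot,\cdot]_M\colon M\times M\to M$ a symmetric bilinear map and $\alpha_M\colon M\to M$ a linear map. Suppose $M=V\oplus J$ for subspaces $J,V$ that are invariant under $\alpha_M$, with $[M,V]_M\subseteq V$, and suppose that $(V,[\cdot,\cdot]_V,\beta)$ is a Hom-Jacobi-Jordan algebra, where $\beta=\alpha_M|_V$ and $[\cdot,\cdot]_V$ is the restriction of $[\cdot,\cdot]_M$ to $V\times V$. Let $\alpha_J=\alpha_M|_J$, let $[\cdot,\cdot]_J\colon J\times J\to J$ and $\theta\colon J\times J\to V$ be the components in $J$ and in $V$ of the restriction of $[\cdot,\cdot]_M$ to $J\times J$ (so $[x,y]_M=[x,y]_J+\theta(x,y)$), and define $\rho\colon J\to\mathrm{End}(V)$ by $\rho(x)v=[x,v]_M$. Then $(M,[\cdot,\cdot]_M,\alpha_M)$ is a Hom-Jacobi-Jordan algebra if and only if (1) $(J,[\cdot,\cdot]_J,\alpha_J)$ is a Hom-Jacobi-Jordan algebra and (2) $(\rho,\theta)$ is a $2$-cocycle of $J$ with values in $V$.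
   Context: A Hom-Jacobi-Jordan algebra is a triple $(A,[\cdot,\cdot],\gamma)$ with $A$ a vector space, $[\cdot,\cdot]$ a symmetric bilinear map $A\times A\to A$ and $\gamma\colon A\to A$ linear such that $\gamma([x,y])=[\gamma(x),\gamma(y)]$ and $[\gamma(x),[y,z]]+[\gamma(y),[z,x]]+[\gamma(z),[x,y]]=0$ for all $x,y,z\in A$. Given Hom-Jacobi-Jordan algebras $(J,[\cdot,\cdot],\alpha)$ and $(V,[\cdot,\cdot]_V,\beta)$, a $2$-cocycle of $J$ with values in $V$ is a pair $(\rho,\theta)$ where $\rho\colon J\to\mathrm{End}(V)$ is linear and $\theta\colon J\times J\to V$ is symmetric bilinear with $\beta(\theta(x,y))=\theta(\alpha(x),\alpha(y))$, such that for all $x,y,z\in J$, $u,v\in V$: (i) $\rho(\alpha(x))\circ\beta=\beta\circ\rho(x)$; (ii) $\rho([x,y])\beta(v)=-\rho(\alpha(x))\rho(y)v-\rho(\alpha(y))\rho(x)v-[\theta(x,y),\beta(v)]_V$; (iii) $\theta(\alpha(x),[y,z])+\theta(\alpha(y),[x,z])+\theta(\alpha(z),[x,y])+\rho(\alpha(x))\theta(y,z)+\rho(\alpha(y))\theta(x,z)+\rho(\alpha(z))\theta(x,y)=0$; (iv) $\rho(\alpha(x))[u,v]_V=-[\beta(u),\rho(x)v]_V-[\beta(v),\rho(x)u]_V$. *)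

From HB Require Import structures.
From mathcomp Require Import all_boot all_order all_algebra.
Set Implicit Arguments. Unset Strict Implicit. Unset Printing Implicit Defensive.
Import GRing.Theory.
Local Open Scope ring_scope.

Section HJJ.
Variable K : fieldType.

Definition lin_map (A B : lmodType K) (f : A -> B) : Prop :=
  forall (a : K) (x y : A), f (a *: x + y) = a *: f x + f y.

Definition sym_bilinear (A B : lmodType K) (br : A -> A -> B) : Prop :=
  (forall x y, br x y = br y x) /\ (forall x, lin_map (br x)).

Definition HJJ (A : lmodType K) (br : A -> A -> A) (g : A -> A) : Prop :=
  [/\ sym_bilinear br, lin_map g,
      (forall x y, g (br x y) = br (g x) (g y)) &
      (forall x y z, br (g x) (br y z) + br (g y) (br z x) + br (g z) (br x y) = 0)].

Definition cocycle2 (J V : lmodType K) (brJ : J -> J -> J) (alpha : J -> J)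
    (brV : V -> V -> V) (beta : V -> V)
    (rho : J -> V -> V) (theta : J -> J -> V) : Prop :=
  [/\
      (forall x, lin_map (rho x)),
      (forall (a : K) x y v, rho (a *: x + y) v = a *: rho x v + rho y v),
      sym_bilinear theta,
      (forall x y, beta (theta x y) = theta (alpha x) (alpha y)) &
      [/\ (* (i) *) (forall x v, rho (alpha x) (beta v) = beta (rho x v)),
          (* (ii) *) (forall x y v, rho (brJ x y) (beta v) =
              - rho (alpha x) (rho y v) - rho (alpha y) (rho x v)
              - brV (theta x y) (beta v)),
          (* (iii) *) (forall x y z,
              theta (alpha x) (brJ y z) + theta (alpha y) (brJ x z)
              + theta (alpha z) (brJ x y) + rho (alpha x) (theta y z)
              + rho (alpha y) (theta x z) + rho (alpha z) (theta x y) = 0) &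
          (* (iv) *) (forall x u v, rho (alpha x) (brV u v) =
              - brV (beta u) (rho x v) - brV (beta v) (rho x u))]].

Variable M : vectType K.
Variables (br : M -> M -> M) (alphaM : M -> M) (V J : {vspace M}).

(* restriction of the bracket to V x V (lands in V since [M,V] <= V) *)
Definition brV (u w : subvs_of V) : subvs_of V := vsproj V (br (vsval u) (vsval w)).
Definition betaV (u : subvs_of V) : subvs_of V := vsproj V (alphaM (vsval u)).
Definition alphaJ (x : subvs_of J) : subvs_of J := vsproj J (alphaM (vsval x)).
Definition brJ (x y : subvs_of J) : subvs_of J :=
  vsproj J (daddv_pi J V (br (vsval x) (vsval y))).
Definition thetaJV (x y : subvs_of J) : subvs_of V :=
  vsproj V (daddv_pi V J (br (vsval x) (vsval y))).
Definition rhoJV (x : subvs_of J) (v : subvs_of V) : subvs_of V :=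
  vsproj V (br (vsval x) (vsval v)).

End HJJ.

Arguments brV {K M} br V u w.
Arguments betaV {K M} alphaM V u.
Arguments alphaJ {K M} alphaM J x.
Arguments brJ {K M} br V J x y.
Arguments thetaJV {K M} br V J x y.
Arguments rhoJV {K M} br V J x v.

From HB Require Import structures.
From mathcomp Require Import all_boot all_order all_algebra.
Set Implicit Arguments. Unset Strict Implicit. Unset Printing Implicit Defensive.
Import GRing.Theory.
Local Open Scope ring_scope.

(* M is Hom-Jacobi-Jordan iff the defect alpha[m,n] - [alpha m, alpha n] and
   the Jacobiator vanish identically. Both are additive in each argument, so it
   suffices that they vanish when every argument lies in V or in J, and by
   symmetry only the cases VV, JV, JJ and VVV, JVV, JJV, JJJ remain. The
   V-only cases are the hypothesis on V; JV, JJV and JVV are the cocycle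
   conditions (i), (ii) and (iv); in the cases JJ and JJJ, the J-components
   are the axioms of (J, [.,.]_J, alpha_J) and the V-components are the
   compatibility of theta with the twists and condition (iii). *)

Section LinearMaps.
Variables (K : fieldType) (A B : lmodType K) (f : A -> B).
Hypothesis f_lin : lin_map f.

Lemma lin_mapD : {morph f : x y / x + y}.
Proof. by move=> x y; have := f_lin 1 x y; rewrite !scale1r. Qed.

Lemma lin_map_linear (C : lmodType K) (g : {linear B -> C}) :
  lin_map (fun x => g (f x)).
Proof. by move=> a x y; rewrite f_lin linearP. Qed.

End LinearMaps.

Section Jacobiator.
Variables (K : fieldType) (A : lmodType K) (br : A -> A -> A) (al : A -> A).
Hypotheses (br_bil : sym_bilinear br) (al_lin : lin_map al).

Definition hom_defect x y := al (br x y) - br (al x) (al y).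

Definition jacobiator x y z :=
  br (al x) (br y z) + br (al y) (br z x) + br (al z) (br x y).

Lemma brC x y : br x y = br y x.
Proof. by case: br_bil. Qed.

Lemma brDr x : {morph br x : y z / y + z}.
Proof. by case: br_bil => _ /(_ x) /lin_mapD. Qed.

Lemma brDl z : {morph br^~ z : x y / x + y}.
Proof. by move=> x y; rewrite !(brC _ z) brDr. Qed.

Lemma lin_map_brr x : lin_map (br x).
Proof. by case: br_bil. Qed.

Lemma lin_map_brl y : lin_map (br^~ y).
Proof. by move=> a x z; rewrite !(brC _ y) lin_map_brr. Qed.

Lemma HJJP :
  HJJ br al <-> {morph al : x y / br x y} /\ (forall x y z, jacobiator x y z = 0).
Proof. by split=> [[_ _ hom jac] | [hom jac]]. Qed.

Lemma hom_defectC x y : hom_defect x y = hom_defect y x.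
Proof. by rewrite /hom_defect brC (brC (al x)). Qed.

Lemma hom_defectDl z : {morph hom_defect^~ z : x y / x + y}.
Proof.
move=> x y; rewrite /hom_defect /= brDl !(lin_mapD al_lin) brDl.
by rewrite opprD addrACA.
Qed.

Lemma hom_defectDr x : {morph hom_defect x : y z / y + z}.
Proof. by move=> y z; rewrite !(hom_defectC x) hom_defectDl. Qed.

Lemma jacobiator_swap12 x y z : jacobiator x y z = jacobiator y x z.
Proof. by rewrite /jacobiator (brC z x) (brC z y) (brC x y) (addrC (br (al x) _)). Qed.

Lemma jacobiator_swap23 x y z : jacobiator x y z = jacobiator x z y.
Proof. by rewrite /jacobiator (brC z y) (brC x z) (brC y x) addrAC. Qed.

Lemma jacobiatorDl y z : {morph (fun x => jacobiator x y z) : x x' / x + x'}.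
Proof.
move=> x x'; rewrite /jacobiator (lin_mapD al_lin) !brDl !brDr.
by rewrite !addrA [LHS](ACl (1*3*5*2*4*6)).
Qed.

Lemma jacobiatorDm x z : {morph (fun y => jacobiator x y z) : y y' / y + y'}.
Proof. by move=> y y'; rewrite /= !(jacobiator_swap12 x) jacobiatorDl. Qed.

Lemma jacobiatorDr x y : {morph (fun z => jacobiator x y z) : z z' / z + z'}.
Proof. by move=> z z'; rewrite /= !(jacobiator_swap23 x y) jacobiatorDm. Qed.

End Jacobiator.

Lemma addr_eq0P (G : zmodType) (a b : G) : a + b = 0 <-> a = - b.
Proof. by split=> [/eqP | ->]; [rewrite addr_eq0 => /eqP | exact: addNr]. Qed.

Lemma sym_bilinear_linear (K : fieldType) (A B C : lmodType K) (f : A -> A -> B)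
    (g : {linear B -> C}) :
  sym_bilinear f -> sym_bilinear (fun x y => g (f x y)).
Proof. by case=> fC f_lin; split=> [x y | x]; [rewrite fC | exact: lin_map_linear]. Qed.

Section Subspaces.
Variables (K : fieldType) (M : vectType K) (U W : {vspace M}).

Lemma lin_map_vsproj (f : M -> M) :
  lin_map f -> lin_map (fun X : subvs_of U => vsproj W (f (vsval X))).
Proof. by move=> f_lin a X Y; rewrite linearP /= f_lin linearP. Qed.

Lemma sym_bilinear_vsproj (f : M -> M -> M) :
  sym_bilinear f ->
  sym_bilinear (fun X Y : subvs_of U => vsproj W (f (vsval X) (vsval Y))).
Proof. by case=> fC f_lin; split=> [X Y | X]; [rewrite fC | exact: lin_map_vsproj]. Qed.

End Subspaces.

Section DirectSum.
Variables (K : fieldType) (M : vectType K) (V J : {vspace M}).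
Hypotheses (VJ_full : (V + J)%VS = fullv) (VJ_cap : (V :&: J)%VS = 0%VS).

Local Notation piV := (daddv_pi V J).
Local Notation piJ := (daddv_pi J V).

Lemma daddv_pi_sum m : piV m + piJ m = m.
Proof. by rewrite daddv_pi_add // VJ_full memvf. Qed.

Lemma piV_id m : m \in V -> piV m = m.
Proof. exact: daddv_pi_id. Qed.

Lemma piJ_id m : m \in J -> piJ m = m.
Proof. by apply: daddv_pi_id; rewrite capvC. Qed.

Lemma piJ_V m : m \in V -> piJ m = 0.
Proof. by move=> mV; apply: (addrI m); rewrite -{1}(piV_id mV) daddv_pi_sum addr0. Qed.

Lemma piV_J m : m \in J -> piV m = 0.
Proof. by move=> mJ; apply: (addIr m); rewrite -{2}(piJ_id mJ) daddv_pi_sum add0r. Qed.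

Definition in_summand m := (m \in V) || (m \in J).

Lemma additive_eq0 (G : zmodType) (f : M -> G) :
  {morph f : x y / x + y} -> (forall m, in_summand m -> f m = 0) ->
  forall m, f m = 0.
Proof.
move=> fD f0 m; rewrite -(daddv_pi_sum m) fD !f0 ?addr0 //.
  by rewrite /in_summand memv_pi orbT.
by rewrite /in_summand memv_pi.
Qed.

Lemma biadditive_eq0 (G : zmodType) (f : M -> M -> G) :
  (forall n, {morph f^~ n : x y / x + y}) -> (forall m, {morph f m : x y / x + y}) ->
  (forall m n, in_summand m -> in_summand n -> f m n = 0) ->
  forall m n, f m n = 0.
Proof.
move=> fDl fDr f0 m n; apply: (additive_eq0 (fDl n)) => {}m Sm.
by apply: (additive_eq0 (fDr m)) => {}n; apply: f0.
Qed.

Lemma triadditive_eq0 (G : zmodType) (f : M -> M -> M -> G) :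
  (forall y z, {morph (fun x => f x y z) : x x' / x + x'}) ->
  (forall x z, {morph (fun y => f x y z) : y y' / y + y'}) ->
  (forall x y, {morph f x y : z z' / z + z'}) ->
  (forall x y z, in_summand x -> in_summand y -> in_summand z -> f x y z = 0) ->
  forall x y z, f x y z = 0.
Proof.
move=> fD1 fD2 fD3 f0 x y z.
apply: (biadditive_eq0 (f := fun x y => f x y z)) => // {}x {}y Sx Sy.
by apply: (additive_eq0 (fD3 x y)) => {}z; apply: f0.
Qed.

Section Extension.
Variables (br : M -> M -> M) (al : M -> M).
Hypotheses (br_bil : sym_bilinear br) (al_lin : lin_map al).
Hypotheses (alJ : forall x, x \in J -> al x \in J) (alV : forall v, v \in V -> al v \in V).
Hypothesis brV_ideal : forall m v, v \in V -> br m v \in V.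

Lemma al_piV m : al (piV m) = piV (al m).
Proof.
have [aV aJ] := (alV (memv_pi V J m), alJ (memv_pi J V m)).
by rewrite -{2}(daddv_pi_sum m) (lin_mapD al_lin) linearD /= (piV_id aV) (piV_J aJ) addr0.
Qed.

Lemma al_piJ m : al (piJ m) = piJ (al m).
Proof.
have [aV aJ] := (alV (memv_pi V J m), alJ (memv_pi J V m)).
by rewrite -{2}(daddv_pi_sum m) (lin_mapD al_lin) linearD /= (piJ_V aV) (piJ_id aJ) add0r.
Qed.

Lemma piJ_br m n : piJ (br m n) = piJ (br m (piJ n)).
Proof.
by rewrite -{1}(daddv_pi_sum n) (brDr br_bil) linearD /= piJ_V ?brV_ideal ?memv_pi // add0r.
Qed.

Lemma piV_br m n : piV (br m n) = piV (br m (piJ n)) + br m (piV n).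
Proof.
have brV := brV_ideal m (memv_pi V J n).
by rewrite -{1}(daddv_pi_sum n) (brDr br_bil) linearD /= (piV_id brV) addrC.
Qed.

Lemma piJ_jacobiator x y z : piJ (jacobiator br al x y z) =
  piJ (br (al x) (piJ (br y z))) + piJ (br (al y) (piJ (br z x)))
  + piJ (br (al z) (piJ (br x y))).
Proof. by rewrite /jacobiator !linearD /= -!piJ_br. Qed.

Lemma piV_jacobiator x y z : piV (jacobiator br al x y z) =
  piV (br (al x) (piJ (br y z))) + piV (br (al y) (piJ (br x z)))
  + piV (br (al z) (piJ (br x y))) + br (al x) (piV (br y z))
  + br (al y) (piV (br x z)) + br (al z) (piV (br x y)).
Proof.
rewrite /jacobiator !linearD /= (piV_br (al x)) (piV_br (al y)) (piV_br (al z)).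
by rewrite (brC br_bil z x) !addrA [LHS](ACl (1*3*5*2*4*6)).
Qed.

(* Cocycle conditions (ii) and (iv) are these two rearrangements of the
   Jacobiator, on J x J x V and on J x V x V respectively. *)
Lemma jacobiator_JJV x y v : jacobiator br al x y v =
  br (piJ (br x y)) (al v)
  + (br (al x) (br y v) + br (al y) (br x v) + br (piV (br x y)) (al v)).
Proof.
rewrite /jacobiator -{1}(daddv_pi_sum (br x y)) (brDr br_bil).
rewrite !(brC br_bil (al v)) (brC br_bil v x).
by rewrite [LHS]addrA [LHS](ACl (4*(1*2*3))).
Qed.

Lemma jacobiator_JVV x u v : jacobiator br al x u v =
  br (al x) (br u v) + (br (al u) (br x v) + br (al v) (br x u)).
Proof. by rewrite /jacobiator (brC br_bil v x) addrA. Qed.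

Lemma brJE (X Y : subvs_of J) :
  vsval (brJ br V J X Y) = piJ (br (vsval X) (vsval Y)).
Proof. by rewrite vsprojK // memv_pi. Qed.

Lemma thetaE (X Y : subvs_of J) :
  vsval (thetaJV br V J X Y) = piV (br (vsval X) (vsval Y)).
Proof. by rewrite vsprojK // memv_pi. Qed.

Lemma rhoE (X : subvs_of J) (v : subvs_of V) :
  vsval (rhoJV br V J X v) = br (vsval X) (vsval v).
Proof. by rewrite vsprojK // brV_ideal // subvsP. Qed.

Lemma brVE (u w : subvs_of V) : vsval (brV br V u w) = br (vsval u) (vsval w).
Proof. by rewrite vsprojK // brV_ideal // subvsP. Qed.

Lemma betaE (u : subvs_of V) : vsval (betaV al V u) = al (vsval u).
Proof. by rewrite vsprojK // alV // subvsP. Qed.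

Lemma alphaJE (X : subvs_of J) : vsval (alphaJ al J X) = al (vsval X).
Proof. by rewrite vsprojK // alJ // subvsP. Qed.

Let subvsE := (brJE, thetaE, rhoE, brVE, betaE, alphaJE).

Lemma HJJ_brVP : HJJ (brV br V) (betaV al V) <->
  {in V &, {morph al : u v / br u v}} /\
  {in V & &, forall u v w, jacobiator br al u v w = 0}.
Proof.
split=> [[_ _ hom jac] | [hom jac]].
  split=> [u v uV vV | u v w uV vV wV].
    by have /(congr1 vsval) := hom (vsproj V u) (vsproj V v); rewrite !subvsE !vsprojK.
  have /(congr1 vsval) := jac (vsproj V u) (vsproj V v) (vsproj V w).
  by rewrite !linearD /= !subvsE !vsprojK.
split=> [||X Y|X Y Z].
- exact: sym_bilinear_vsproj.
- exact: lin_map_vsproj.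
- by apply: subvs_inj; rewrite !subvsE hom ?subvsP.
- by apply: subvs_inj; rewrite !linearD /= !subvsE; apply: jac; apply: subvsP.
Qed.

Lemma HJJ_brJP : HJJ (brJ br V J) (alphaJ al J) <->
  {in J &, {morph al : x y / piJ (br x y)}} /\
  {in J & &, forall x y z, piJ (jacobiator br al x y z) = 0}.
Proof.
split=> [[_ _ hom jac] | [hom jac]].
  split=> [x y xJ yJ | x y z xJ yJ zJ].
    by have /(congr1 vsval) := hom (vsproj J x) (vsproj J y); rewrite !subvsE !vsprojK.
  rewrite piJ_jacobiator.
  have /(congr1 vsval) := jac (vsproj J x) (vsproj J y) (vsproj J z).
  by rewrite !linearD /= !subvsE !vsprojK.
split=> [||X Y|X Y Z].
- apply: (@sym_bilinear_vsproj _ _ _ _ (fun x y => piJ (br x y))).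
  exact: sym_bilinear_linear.
- exact: lin_map_vsproj.
- by apply: subvs_inj; rewrite !subvsE hom ?subvsP.
- by apply: subvs_inj; rewrite !linearD /= !subvsE -piJ_jacobiator jac ?subvsP.
Qed.

Lemma cocycle2P :
  cocycle2 (brJ br V J) (alphaJ al J) (brV br V) (betaV al V)
           (rhoJV br V J) (thetaJV br V J) <->
  [/\ {in J &, {morph al : x y / piV (br x y)}},
      {in J & V, {morph al : x v / br x v}},
      (forall x y v, x \in J -> y \in J -> v \in V -> jacobiator br al x y v = 0),
      {in J & &, forall x y z, piV (jacobiator br al x y z) = 0} &
      (forall x u v, x \in J -> u \in V -> v \in V -> jacobiator br al x u v = 0)].
Proof.
split=> [[_ _ _ hom [homJV jacJJV jacJJJ jacJVV]] | [hom homJV jacJJV jacJJJ jacJVV]].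
  split=> [x y xJ yJ | x v xJ vV | x y v xJ yJ vV | x y z xJ yJ zJ | x u v xJ uV vV].
  - by have /(congr1 vsval) := hom (vsproj J x) (vsproj J y); rewrite !subvsE !vsprojK.
  - have /(congr1 vsval) := homJV (vsproj J x) (vsproj V v).
    by rewrite !subvsE !vsprojK // => <-.
  - rewrite jacobiator_JJV; apply/addr_eq0P.
    have /(congr1 vsval) := jacJJV (vsproj J x) (vsproj J y) (vsproj V v).
    by rewrite !linearB linearN /= !subvsE !vsprojK // -!opprD.
  - rewrite piV_jacobiator.
    have /(congr1 vsval) := jacJJJ (vsproj J x) (vsproj J y) (vsproj J z).
    by rewrite !linearD /= !subvsE !vsprojK.
  - rewrite jacobiator_JVV; apply/addr_eq0P.
    have /(congr1 vsval) := jacJVV (vsproj J x) (vsproj V u) (vsproj V v).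
    by rewrite !linearB linearN /= !subvsE !vsprojK // -!opprD.
split=> [X | a X Y v | | X Y | ].
- by apply: lin_map_vsproj; apply: lin_map_brr.
- exact: (@lin_map_vsproj _ _ J V _ (lin_map_brl br_bil (vsval v))).
- apply: (@sym_bilinear_vsproj _ _ _ _ (fun x y => piV (br x y))).
  exact: sym_bilinear_linear.
- by apply: subvs_inj; rewrite !subvsE hom ?subvsP.
split=> [X v | X Y v | X Y Z | X u v]; apply: subvs_inj.
- by rewrite !subvsE homJV ?subvsP.
- rewrite !linearB linearN /= !subvsE -!opprD; apply/addr_eq0P.
  by rewrite -jacobiator_JJV jacJJV ?subvsP.
- by rewrite !linearD /= !subvsE -piV_jacobiator jacJJJ ?subvsP.
- rewrite !linearB linearN /= !subvsE -!opprD; apply/addr_eq0P.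
  by rewrite -jacobiator_JVV jacJVV ?subvsP.
Qed.

Lemma hom_of_summands :
  {in V &, {morph al : u v / br u v}} -> {in J & V, {morph al : x v / br x v}} ->
  {in J &, {morph al : x y / piJ (br x y)}} -> {in J &, {morph al : x y / piV (br x y)}} ->
  {morph al : m n / br m n}.
Proof.
move=> homV homJV homJ homJ' m n; apply/eqP; rewrite -subr_eq0; apply/eqP.
apply: (biadditive_eq0 (f := hom_defect br al)) m n => [n | m | m n].
- exact: hom_defectDl.
- exact: hom_defectDr.
rewrite /hom_defect => /orP[mV | mJ] /orP[nV | nJ]; apply/eqP; rewrite subr_eq0; apply/eqP.
- exact: homV.
- by rewrite (brC br_bil m) homJV // brC.
- exact: homJV.
by rewrite -(daddv_pi_sum (br m n)) (lin_mapD al_lin) homJ' // homJ // daddv_pi_sum.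
Qed.

Lemma jacobiator_of_summands :
  {in V & &, forall u v w, jacobiator br al u v w = 0} ->
  (forall x u v, x \in J -> u \in V -> v \in V -> jacobiator br al x u v = 0) ->
  (forall x y v, x \in J -> y \in J -> v \in V -> jacobiator br al x y v = 0) ->
  {in J & &, forall x y z, piJ (jacobiator br al x y z) = 0} ->
  {in J & &, forall x y z, piV (jacobiator br al x y z) = 0} ->
  forall x y z, jacobiator br al x y z = 0.
Proof.
move=> jacV jacJVV jacJJV jacJ jacJ'.
apply: triadditive_eq0 => [y z | x z | x y | x y z]; first exact: jacobiatorDl.
- exact: jacobiatorDm.
- exact: jacobiatorDr.
case/orP=> [xV | xJ] /orP[yV | yJ] /orP[zV | zJ].
- exact: jacV.
- by rewrite jacobiator_swap23 // jacobiator_swap12 // jacJVV.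
- by rewrite jacobiator_swap12 // jacJVV.
- by rewrite jacobiator_swap12 // jacobiator_swap23 // jacJJV.
- exact: jacJVV.
- by rewrite jacobiator_swap23 // jacJJV.
- exact: jacJJV.
by rewrite -(daddv_pi_sum (jacobiator br al x y z)) jacJ' // jacJ // addr0.
Qed.

Lemma HJJ_brJ_of_HJJ : HJJ br al -> HJJ (brJ br V J) (alphaJ al J).
Proof.
case/(HJJP br_bil al_lin)=> hom jac; apply/HJJ_brJP.
by split=> [x y _ _ | x y z _ _ _]; rewrite ?al_piJ ?hom ?jac ?linear0.
Qed.

Lemma cocycle2_of_HJJ : HJJ br al ->
  cocycle2 (brJ br V J) (alphaJ al J) (brV br V) (betaV al V)
           (rhoJV br V J) (thetaJV br V J).
Proof.
case/(HJJP br_bil al_lin)=> hom jac; apply/cocycle2P.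
by split=> [x y | x v | x y v | x y z | x u v] *; rewrite ?al_piV ?hom ?jac ?linear0.
Qed.

Lemma HJJ_of_cocycle2 :
  HJJ (brV br V) (betaV al V) -> HJJ (brJ br V J) (alphaJ al J) ->
  cocycle2 (brJ br V J) (alphaJ al J) (brV br V) (betaV al V)
           (rhoJV br V J) (thetaJV br V J) ->
  HJJ br al.
Proof.
case/HJJ_brVP=> homV jacV /HJJ_brJP[homJ jacJ].
case/cocycle2P=> homJ' homJV jacJJV jacJ' jacJVV.
apply/(HJJP br_bil al_lin); split; first exact: hom_of_summands.
exact: jacobiator_of_summands.
Qed.

End Extension.
End DirectSum.

Theorem theorem2p3 (K : fieldType) (M : vectType K)
    (br : M -> M -> M) (alphaM : M -> M) (V J : {vspace M}) :
  sym_bilinear br ->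
  lin_map alphaM ->
  (V + J)%VS = fullv ->
  (V :&: J)%VS = 0%VS ->
  (forall x, x \in J -> alphaM x \in J) ->
  (forall v, v \in V -> alphaM v \in V) ->
  (forall x v, v \in V -> br x v \in V) ->
  HJJ (brV br V) (betaV alphaM V) ->
  (HJJ br alphaM <->
     HJJ (brJ br V J) (alphaJ alphaM J) /\
     cocycle2 (brJ br V J) (alphaJ alphaM J) (brV br V) (betaV alphaM V)
              (rhoJV br V J) (thetaJV br V J)).
Proof.
move=> br_bil al_lin VJ_full VJ_cap alJ alV brV_ideal HJJ_V.
split=> [HJJ_M | [HJJ_J cocycle]].
  by split; [exact: HJJ_brJ_of_HJJ | exact: cocycle2_of_HJJ].
exact: (HJJ_of_cocycle2 VJ_full VJ_cap).
Qed.
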